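(* Let $(X,\le)$ be a globally hyperbolic poset. A formal interval is a map $x:\{1,2\}\to X$ with $x(1)\le x(2)$. The set of formal intervals, ordered by $x\sqsubseteq y$ iff $x(1)\le y(1)$ and $y(2)\le x(2)$, is a domain (continuous dcpo) order-isomorphic to $\mathbf{I}X$, the set $\{[a,b]: a\le b\}$ of closed intervals $[a,b]=\{z: a\le z\le b\}$ of $X$ ordered by reverse inclusion.
   Context: For a poset $(P,\sqsubseteq)$: a nonempty $S\subseteq P$ is directed if any two elements have an upper bound in $S$, filtered if any two have a lower bound in $S$; $\bigsqcup S$, $\bigwedge S$ denote supremum/infimum. $x\ll y$ iff for every directed $S$ with a supremum, $y\sqsubseteq\bigsqcup S$ implies $x\sqsubseteq s$ for some $s\in S$. $\Downarrow x=\{a:a\ll x\}$, $\Uparrow x=\{a:x\ll a\}$. $P$ is continuous if it has a subset $B$ such that for every $x$, $B\cap\Downarrow x$ contains a directed set with supremum $x$. A domain is a continuous poset in which every directed set has a supremum. A continuous poset is bicontinuous if (1) $x\ll y$ iff for every filtered $S$ having an infimum, $\bigwedge S\sqsubseteq x$ implies $s\sqsubseteq y$ for some $s\in S$; and (2) each $\Uparrow x$ is filtered with infimum $x$. The interval topology of a bicontinuous poset has basis the sets $\{z: a\ll z\ll b\}$. A globally hyperbolic poset is a bicontinuous poset in which every closed interval $[a,b]$ is compact in the interval topology. *)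

From Stdlib Require Import List.
Import ListNotations.

Section OrderDefs.
Variable T : Type.
Variable le : T -> T -> Prop.

Definition is_poset : Prop :=
  (forall x, le x x) /\
  (forall x y, le x y -> le y x -> x = y) /\
  (forall x y z, le x y -> le y z -> le x z).

Definition directed (S : T -> Prop) : Prop :=
  (exists x, S x) /\
  (forall x y, S x -> S y -> exists z, S z /\ le x z /\ le y z).

Definition filtered (S : T -> Prop) : Prop :=
  (exists x, S x) /\
  (forall x y, S x -> S y -> exists z, S z /\ le z x /\ le z y).

Definition is_sup (S : T -> Prop) (s : T) : Prop :=
  (forall x, S x -> le x s) /\ (forall u, (forall x, S x -> le x u) -> le s u).

Definition is_inf (S : T -> Prop) (s : T) : Prop :=
  (forall x, S x -> le s x) /\ (forall u, (forall x, S x -> le u x) -> le u s).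

Definition waybelow (x y : T) : Prop :=
  forall (S : T -> Prop) (s : T), directed S -> is_sup S s -> le y s ->
    exists z, S z /\ le x z.

Definition ddown (x : T) : T -> Prop := fun a => waybelow a x.
Definition uup (x : T) : T -> Prop := fun a => waybelow x a.

Definition continuous_poset : Prop :=
  is_poset /\
  exists B : T -> Prop, forall x, exists S : T -> Prop,
    (forall z, S z -> B z /\ waybelow z x) /\ directed S /\ is_sup S x.

Definition dcpo_prop : Prop :=
  forall S : T -> Prop, directed S -> exists s, is_sup S s.

Definition is_domain : Prop := continuous_poset /\ dcpo_prop.

Definition bicontinuous : Prop :=
  continuous_poset /\
  (forall x y, waybelow x y <->
     (forall (S : T -> Prop) (s : T), filtered S -> is_inf S s -> le s x ->
        exists z, S z /\ le z y)) /\
  (forall x, filtered (uup x) /\ is_inf (uup x) x).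

Definition interval_open (U : T -> Prop) : Prop :=
  forall z, U z -> exists a b, waybelow a z /\ waybelow z b /\
    (forall w, waybelow a w -> waybelow w b -> U w).

Definition cinterval (a b : T) : T -> Prop := fun z => le a z /\ le z b.

Definition interval_compact (K : T -> Prop) : Prop :=
  forall C : (T -> Prop) -> Prop,
    (forall U, C U -> interval_open U) ->
    (forall z, K z -> exists U, C U /\ U z) ->
    exists l : list (T -> Prop),
      (forall U, In U l -> C U) /\ (forall z, K z -> exists U, In U l /\ U z).

Definition globally_hyperbolic : Prop :=
  bicontinuous /\ forall a b, interval_compact (cinterval a b).

(* formal intervals: maps x : {1,2} -> T (encoded as pairs) with x(1) <= x(2) *)
Definition formal_interval : Type := { p : T * T | le (fst p) (snd p) }.

Definition fi_le (x y : formal_interval) : Prop :=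
  le (fst (proj1_sig x)) (fst (proj1_sig y)) /\
  le (snd (proj1_sig y)) (snd (proj1_sig x)).

Definition IX : Type :=
  { A : T -> Prop | exists a b, le a b /\ A = cinterval a b }.

Definition IX_le (A B : IX) : Prop :=
  forall z, proj1_sig B z -> proj1_sig A z.

End OrderDefs.

Arguments formal_interval {T} le.
Arguments IX {T} le.

Definition order_isomorphic {A B : Type} (leA : A -> A -> Prop)
  (leB : B -> B -> Prop) : Prop :=
  exists (f : A -> B) (g : B -> A),
    (forall x, g (f x) = x) /\ (forall y, f (g y) = y) /\
    (forall x y, leA x y <-> leB (f x) (f y)).

From Stdlib Require Import List Classical ProofIrrelevance ClassicalEpsilon.

(* In the interval topology of a bicontinuous poset the complement of a closed
   interval [p, q] is open, so compactness of [a, b] gives the finite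
   intersection property for closed intervals meeting [a, b].  Applied to the
   intervals [l, u] with l in a directed set L and u an upper bound of L, it
   produces the supremum of L; dually for infima of filtered sets.  Hence a
   directed family of formal intervals has a supremum, whose ends are the
   supremum of the left ends and the infimum of the right ends.  A formal
   interval x is the supremum of the directed family of the [a, b] with
   a << x(1) and x(2) << b, and each of these is way below x by the two halves
   of bicontinuity.  Finally x |-> [x(1), x(2)] is an order isomorphism because
   [c, d] is contained in [a, b] exactly when a <= c and d <= b. *)

Lemma list_choice {A I : Type} (P : I -> Prop) (Q : I -> A -> Prop) (l : list A) :
  (forall U, In U l -> exists i, P i /\ Q i U) ->
  exists li : list I, (forall i, In i li -> P i) /\
    (forall U, In U l -> exists i, In i li /\ Q i U).
Proof.
  induction l as [|U l IH]; intros hl.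
  - exists nil. split; intros ? [].
  - destruct IH as [li [hli hlli]]; [intros V hV; apply hl; now right|].
    destruct (hl U (or_introl eq_refl)) as [i [hi hiU]].
    exists (i :: li). split.
    + intros j [<-|hj]; auto.
    + intros V [<-|hV]; [now exists i; split; [left|]|].
      destruct (hlli V hV) as [j [hj hjV]]. exists j. split; [now right | exact hjV].
Qed.

Lemma directed_list_ub {T : Type} (R : T -> T -> Prop)
  (R_trans : forall x y z, R x y -> R y z -> R x z) (S : T -> Prop) :
  directed T R S -> forall a l, S a -> (forall x, In x l -> S x) ->
  exists m, S m /\ R a m /\ forall x, In x l -> R x m.
Proof.
  intros [_ hS] a l ha. induction l as [|y l IH]; intros hl.
  - destruct (hS a a ha ha) as [m [hm [ham _]]]. now exists m.
  - destruct IH as [m [hm [ham hlm]]]; [intros x hx; apply hl; now right|].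
    destruct (hS m y hm (hl y (or_introl eq_refl))) as [m' [hm' [hmm' hym']]].
    exists m'. split; [exact hm'|]. split; [eauto|].
    intros x [<-|hx]; eauto.
Qed.

Lemma compact_fip {X : Type} (le : X -> X -> Prop) (K : X -> Prop)
  {I : Type} (P : I -> Prop) (F : I -> X -> Prop) :
  interval_compact X le K ->
  (forall i, P i -> interval_open X le (fun z => ~ F i z)) ->
  (forall l, (forall i, In i l -> P i) -> exists z, K z /\ forall i, In i l -> F i z) ->
  exists z, K z /\ forall i, P i -> F i z.
Proof.
  intros hK hopen hfin. apply NNPP; intros hnone.
  destruct (hK (fun U => exists i, P i /\ U = (fun z => ~ F i z))) as [Us [hUs hcover]].
  - intros U [i [hi ->]]. exact (hopen i hi).
  - intros z hz.
    destruct (not_all_not_ex _ (fun i => P i /\ ~ F i z)) as [i [hi hFi]].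
    { intros hall. apply hnone. exists z. split; [exact hz|].
      intros i hi. apply NNPP. intros hFi. exact (hall i (conj hi hFi)). }
    exists (fun z => ~ F i z). split; [now exists i | exact hFi].
  - destruct (list_choice P (fun i U => U = (fun z => ~ F i z)) Us hUs)
      as [li [hli hUsli]].
    destruct (hfin li hli) as [z [hz hFz]].
    destruct (hcover z hz) as [U [hU hUz]].
    destruct (hUsli U hU) as [i [hi ->]].
    exact (hUz (hFz i hi)).
Qed.

Lemma order_isomorphic_of_bijective {A B : Type} (leA : A -> A -> Prop)
  (leB : B -> B -> Prop) (f : A -> B) :
  (forall x y, f x = f y -> x = y) -> (forall y, exists x, f x = y) ->
  (forall x y, leA x y <-> leB (f x) (f y)) -> order_isomorphic leA leB.
Proof.
  intros finj fsurj fle.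
  exists f, (fun y => proj1_sig (constructive_indefinite_description _ (fsurj y))).
  split; [|split; [|exact fle]].
  - intros x. apply finj.
    exact (proj2_sig (constructive_indefinite_description _ (fsurj (f x)))).
  - intros y. exact (proj2_sig (constructive_indefinite_description _ (fsurj y))).
Qed.

Section Poset.
Variables (X : Type) (le : X -> X -> Prop).
Hypothesis hX : is_poset X le.

Let le_refl : forall x, le x x := proj1 hX.
Let le_antisym : forall x y, le x y -> le y x -> x = y := proj1 (proj2 hX).
Let le_trans : forall x y z, le x y -> le y z -> le x z := proj2 (proj2 hX).

Lemma waybelow_le x y : waybelow X le x y -> le x y.
Proof.
  intros hxy.
  destruct (hxy (eq y) y) as [z [<- hz]]; [| |apply le_refl|exact hz].
  - split; [now exists y|]. intros a b <- <-. exists y. auto.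
  - split; [now intros a <- | intros u hu; exact (hu y eq_refl)].
Qed.

Lemma cinterval_incl a b c d : le c d ->
  (forall z, cinterval X le c d z -> cinterval X le a b z) <-> le a c /\ le d b.
Proof.
  intros hcd. split.
  - intros hincl. split.
    + exact (proj1 (hincl c (conj (le_refl c) hcd))).
    + exact (proj2 (hincl d (conj hcd (le_refl d)))).
  - intros [hac hdb] z [hcz hzd]. split; eauto.
Qed.

Definition fi_lo (x : formal_interval le) : X := fst (proj1_sig x).
Definition fi_hi (x : formal_interval le) : X := snd (proj1_sig x).

Lemma fi_lo_le_hi x : le (fi_lo x) (fi_hi x).
Proof. exact (proj2_sig x). Qed.

Lemma fi_eq x y : fi_lo x = fi_lo y -> fi_hi x = fi_hi y -> x = y.
Proof.
  destruct x as [[a b] hab], y as [[c d] hcd]. unfold fi_lo, fi_hi; simpl.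
  intros -> ->. now apply subset_eq_compat.
Qed.

Lemma fi_poset : is_poset (formal_interval le) (fi_le X le).
Proof.
  split; [|split].
  - intros x. split; apply le_refl.
  - intros x y [hlo hhi] [hlo' hhi']. apply fi_eq; auto.
  - intros x y z [hlo hhi] [hlo' hhi']. split; eauto.
Qed.

Definition fi_los (D : formal_interval le -> Prop) : X -> Prop :=
  fun a => exists x, D x /\ a = fi_lo x.
Definition fi_his (D : formal_interval le -> Prop) : X -> Prop :=
  fun b => exists x, D x /\ b = fi_hi x.

Lemma fi_is_sup D s :
  is_sup X le (fi_los D) (fi_lo s) -> is_inf X le (fi_his D) (fi_hi s) ->
  is_sup _ (fi_le X le) D s.
Proof.
  intros [hlo_ub hlo_least] [hhi_lb hhi_greatest]. split.
  - intros x hx. split; [apply hlo_ub | apply hhi_lb]; now exists x.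
  - intros u hu. split.
    + apply hlo_least. intros a [x [hx ->]]. exact (proj1 (hu x hx)).
    + apply hhi_greatest. intros b [x [hx ->]]. exact (proj2 (hu x hx)).
Qed.

Section DirectedFamily.
Variable D : formal_interval le -> Prop.
Hypothesis hD : directed _ (fi_le X le) D.

Lemma directed_fi_lo_le_hi x y : D x -> D y -> le (fi_lo x) (fi_hi y).
Proof.
  intros hx hy. destruct (proj2 hD x y hx hy) as [z [_ [[hxz _] [_ hyz]]]].
  apply le_trans with (fi_lo z); [exact hxz|].
  apply le_trans with (fi_hi z); [apply fi_lo_le_hi | exact hyz].
Qed.

Lemma directed_fi_los : directed X le (fi_los D).
Proof.
  destruct hD as [[e he] hDdir]. split; [now exists (fi_lo e), e|].
  intros a b [x [hx ->]] [y [hy ->]].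
  destruct (hDdir x y hx hy) as [z [hz [[hxz _] [hyz _]]]].
  exists (fi_lo z). split; [now exists z | now split].
Qed.

Lemma filtered_fi_his : filtered X le (fi_his D).
Proof.
  destruct hD as [[e he] hDdir]. split; [now exists (fi_hi e), e|].
  intros a b [x [hx ->]] [y [hy ->]].
  destruct (hDdir x y hx hy) as [z [hz [[_ hzx] [_ hzy]]]].
  exists (fi_hi z). split; [now exists z | now split].
Qed.

End DirectedFamily.

Definition fi_box (SL SR : X -> Prop) : formal_interval le -> Prop :=
  fun y => SL (fi_lo y) /\ SR (fi_hi y).

Section Box.
Variables SL SR : X -> Prop.
Hypothesis hcross : forall a b, SL a -> SR b -> le a b.

Lemma fi_box_directed :
  directed X le SL -> filtered X le SR -> directed _ (fi_le X le) (fi_box SL SR).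
Proof.
  intros [[a ha] hSL] [[b hb] hSR]. split.
  - exists (exist _ (a, b) (hcross a b ha hb)). now split.
  - intros y y' [hy hy'] [hz hz'].
    destruct (hSL _ _ hy hz) as [a' [ha' [hya' hza']]].
    destruct (hSR _ _ hy' hz') as [b' [hb' [hb'y hb'z]]].
    exists (exist _ (a', b') (hcross a' b' ha' hb')).
    split; [now split | split; now split].
Qed.

Lemma fi_box_sup x :
  (exists a, SL a) -> (exists b, SR b) ->
  is_sup X le SL (fi_lo x) -> is_inf X le SR (fi_hi x) ->
  is_sup _ (fi_le X le) (fi_box SL SR) x.
Proof.
  intros [a0 ha0] [b0 hb0] [hSL_ub hSL_least] [hSR_lb hSR_greatest]. split.
  - intros y [hy hy']. split; [exact (hSL_ub _ hy) | exact (hSR_lb _ hy')].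
  - intros u hu. split.
    + apply hSL_least. intros a ha.
      exact (proj1 (hu (exist _ (a, b0) (hcross a b0 ha hb0)) (conj ha hb0))).
    + apply hSR_greatest. intros b hb.
      exact (proj2 (hu (exist _ (a0, b) (hcross a0 b ha0 hb)) (conj ha0 hb))).
Qed.

End Box.

Definition fi_cinterval (x : formal_interval le) : IX le :=
  exist _ (cinterval X le (fi_lo x) (fi_hi x))
    (ex_intro _ (fi_lo x) (ex_intro _ (fi_hi x) (conj (fi_lo_le_hi x) eq_refl))).

Lemma fi_le_cinterval x y :
  fi_le X le x y <-> IX_le X le (fi_cinterval x) (fi_cinterval y).
Proof. symmetry. exact (cinterval_incl _ _ _ _ (fi_lo_le_hi y)). Qed.

Lemma fi_cinterval_inj x y : fi_cinterval x = fi_cinterval y -> x = y.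
Proof.
  intros e. destruct fi_poset as [_ [fi_antisym _]].
  apply fi_antisym; apply fi_le_cinterval; rewrite e; now intros z.
Qed.

Lemma fi_cinterval_surj (A : IX le) : exists x, fi_cinterval x = A.
Proof.
  destruct A as [P [a [b [hab hP]]]].
  exists (exist _ (a, b) hab). now apply subset_eq_compat.
Qed.

Section Bicontinuous.
Hypothesis hb : bicontinuous X le.

Lemma waybelow_approximation z : exists S : X -> Prop,
  (forall a, S a -> waybelow X le a z) /\ directed X le S /\ is_sup X le S z.
Proof.
  destruct hb as [[_ [B hB]] _]. destruct (hB z) as [S [hS hSz]].
  exists S. split; [intros a ha; exact (proj2 (hS a ha)) | exact hSz].
Qed.

Lemma waybelow_inf_filtered x y : waybelow X le x y ->
  forall S s, filtered X le S -> is_inf X le S s -> le s x -> exists z, S z /\ le z y.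
Proof. exact (proj1 (proj1 (proj2 hb) x y)). Qed.

Lemma not_le_waybelow_above p z : ~ le p z -> exists b, waybelow X le z b /\ ~ le p b.
Proof.
  intros hpz. apply NNPP. intros hnone. apply hpz.
  apply (proj2 (proj2 (proj2 (proj2 hb) z))). intros b hzb.
  apply NNPP. intros hpb. exact (hnone (ex_intro _ b (conj hzb hpb))).
Qed.

Lemma not_le_waybelow_below z q : ~ le z q -> exists a, waybelow X le a z /\ ~ le a q.
Proof.
  intros hzq. destruct (waybelow_approximation z) as [S [hS [_ [_ hSz]]]].
  apply NNPP. intros hnone. apply hzq. apply hSz. intros a ha.
  apply NNPP. intros haq. exact (hnone (ex_intro _ a (conj (hS a ha) haq))).
Qed.

Lemma interval_open_not_cinterval p q :
  interval_open X le (fun z => ~ cinterval X le p q z).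
Proof.
  intros z hz. apply not_and_or in hz as [hpz|hzq].
  - destruct (not_le_waybelow_above p z hpz) as [b [hzb hpb]].
    destruct (waybelow_approximation z) as [S [hS [[[a ha] _] _]]].
    exists a, b. split; [exact (hS a ha)|]. split; [exact hzb|].
    intros w _ hwb [hpw _]. exact (hpb (le_trans _ _ _ hpw (waybelow_le _ _ hwb))).
  - destruct (not_le_waybelow_below z q hzq) as [a [haz haq]].
    destruct (proj2 (proj2 hb) z) as [[[b hzb] _] _].
    exists a, b. split; [exact haz|]. split; [exact hzb|].
    intros w haw _ [_ hwq]. exact (haq (le_trans _ _ _ (waybelow_le _ _ haw) hwq)).
Qed.

Lemma directed_bounded_sup a b (L : X -> Prop) :
  interval_compact X le (cinterval X le a b) ->
  directed X le L -> L a -> (forall l, L l -> le l b) -> exists s, is_sup X le L s.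
Proof.
  intros hK hL ha hLb.
  destruct (compact_fip le _ (fun p => L (fst p) /\ forall l, L l -> le l (snd p))
    (fun p => cinterval X le (fst p) (snd p)) hK) as [s [_ hs]].
  - intros p _. apply interval_open_not_cinterval.
  - intros ps hps.
    destruct (directed_list_ub le le_trans L hL a (map fst ps) ha) as [m [hm [ham hpsm]]].
    { intros l hl. apply in_map_iff in hl as [p [<- hp]]. exact (proj1 (hps p hp)). }
    exists m. split; [split; [exact ham | exact (hLb m hm)]|].
    intros p hp. split; [apply hpsm, in_map, hp | exact (proj2 (hps p hp) m hm)].
  - exists s. split.
    + intros l hl. exact (proj1 (hs (l, b) (conj hl hLb))).
    + intros u hu. exact (proj2 (hs (a, u) (conj ha hu))).
Qed.

Lemma filtered_bounded_inf a b (R : X -> Prop) :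
  interval_compact X le (cinterval X le a b) ->
  filtered X le R -> R b -> (forall r, R r -> le a r) -> exists t, is_inf X le R t.
Proof.
  intros hK hR hb' haR.
  destruct (compact_fip le _ (fun p => (forall r, R r -> le (fst p) r) /\ R (snd p))
    (fun p => cinterval X le (fst p) (snd p)) hK) as [t [_ ht]].
  - intros p _. apply interval_open_not_cinterval.
  - intros ps hps.
    destruct (directed_list_ub (fun x y => le y x) (fun x y z hxy hyz => le_trans _ _ _ hyz hxy)
      R hR b (map snd ps) hb') as [m [hm [hmb hpsm]]].
    { intros r hr. apply in_map_iff in hr as [p [<- hp]]. exact (proj2 (hps p hp)). }
    exists m. split; [split; [exact (haR m hm) | exact hmb]|].
    intros p hp. split; [exact (proj1 (hps p hp) m hm) | apply hpsm, in_map, hp].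
  - exists t. split.
    + intros r hr. exact (proj2 (ht (a, r) (conj haR hr))).
    + intros u hu. exact (proj1 (ht (u, b) (conj hu hb'))).
Qed.

Section CompactIntervals.
Hypothesis hcompact : forall a b, interval_compact X le (cinterval X le a b).

Lemma fi_directed_sup D : directed _ (fi_le X le) D ->
  exists s, is_sup X le (fi_los D) (fi_lo s) /\ is_inf X le (fi_his D) (fi_hi s).
Proof.
  intros hD. pose proof hD as [[e he] _].
  destruct (directed_bounded_sup (fi_lo e) (fi_hi e) (fi_los D) (hcompact _ _)
    (directed_fi_los D hD)) as [s hs].
  { now exists e. }
  { intros l [x [hx ->]]. exact (directed_fi_lo_le_hi D hD x e hx he). }
  destruct (filtered_bounded_inf (fi_lo e) (fi_hi e) (fi_his D) (hcompact _ _)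
    (filtered_fi_his D hD)) as [t ht].
  { now exists e. }
  { intros r [y [hy ->]]. exact (directed_fi_lo_le_hi D hD e y he hy). }
  assert (hst : le s t).
  { apply (proj2 ht). intros r [y [hy ->]]. apply (proj2 hs).
    intros l [x [hx ->]]. exact (directed_fi_lo_le_hi D hD x y hx hy). }
  now exists (exist _ (s, t) hst).
Qed.

Lemma fi_dcpo : dcpo_prop _ (fi_le X le).
Proof.
  intros D hD. destruct (fi_directed_sup D hD) as [s [hlo hhi]].
  exists s. exact (fi_is_sup D s hlo hhi).
Qed.

Lemma fi_waybelow y x :
  waybelow X le (fi_lo y) (fi_lo x) -> waybelow X le (fi_hi x) (fi_hi y) ->
  waybelow _ (fi_le X le) y x.
Proof.
  intros hlo hhi S s hS hs [hxs_lo hxs_hi].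
  destruct (fi_directed_sup S hS) as [s' [hlo' hhi']].
  assert (hss' : fi_le X le s s').
  { apply (proj2 hs). exact (proj1 (fi_is_sup S s' hlo' hhi')). }
  destruct (hlo (fi_los S) (fi_lo s') (directed_fi_los S hS) hlo')
    as [a [[e [he ->]] hye]].
  { exact (le_trans _ _ _ hxs_lo (proj1 hss')). }
  destruct (waybelow_inf_filtered _ _ hhi (fi_his S) (fi_hi s') (filtered_fi_his S hS) hhi')
    as [b [[e' [he' ->]] he'y]].
  { exact (le_trans _ _ _ (proj2 hss') hxs_hi). }
  destruct (proj2 hS e e' he he') as [z [hz [[hez _] [_ hze']]]].
  exists z. split; [exact hz|]. split; eauto.
Qed.

Lemma fi_continuous : continuous_poset _ (fi_le X le).
Proof.
  split; [exact fi_poset|]. exists (fun _ => True). intros x.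
  destruct (waybelow_approximation (fi_lo x)) as [SL [hSL [hSLdir hSLsup]]].
  destruct (proj2 (proj2 hb) (fi_hi x)) as [hSRfilt hSRinf].
  assert (hcross : forall a b, SL a -> uup X le (fi_hi x) b -> le a b).
  { intros a b ha hxb. apply le_trans with (fi_lo x); [exact (waybelow_le _ _ (hSL a ha))|].
    apply le_trans with (fi_hi x); [apply fi_lo_le_hi | exact (waybelow_le _ _ hxb)]. }
  exists (fi_box SL (uup X le (fi_hi x))). split; [|split].
  - intros y [hy hy']. split; [exact I|]. exact (fi_waybelow y x (hSL _ hy) hy').
  - exact (fi_box_directed _ _ hcross hSLdir hSRfilt).
  - exact (fi_box_sup _ _ hcross x (proj1 hSLdir) (proj1 hSRfilt) hSLsup hSRinf).
Qed.

End CompactIntervals.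
End Bicontinuous.
End Poset.

Theorem mainTheorem4 (X : Type) (le : X -> X -> Prop)
  (hX : is_poset X le) (hgh : globally_hyperbolic X le) :
  is_domain (formal_interval le) (fi_le X le) /\
  order_isomorphic (fi_le X le) (IX_le X le).
Proof.
  destruct hgh as [hb hcompact]. split.
  - split; [exact (fi_continuous X le hX hb hcompact) | exact (fi_dcpo X le hX hb hcompact)].
  - apply (order_isomorphic_of_bijective _ _ (fi_cinterval X le)).
    + exact (fi_cinterval_inj X le hX).
    + exact (fi_cinterval_surj X le).
    + exact (fi_le_cinterval X le hX).
Qed.
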